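(* Let $\mathbf{x}\in\Sigma_q^*$ with $|\mathbf{x}|\ge 5$ and let $\mathbf{x}'\in D^*(\mathbf{x})$. Suppose $\mathbf{x}=\mathbf{r}\,ab\,\mathbf{t}\,de\,\mathbf{s}$ with $a,b,d,e\in\Sigma_q$, $\mathbf{r},\mathbf{t},\mathbf{s}\in\Sigma_q^*$ and $\mathbf{t}$ nonempty. Then there exist $\mathbf{u},\mathbf{w},\mathbf{v}\in\Sigma_q^*$ such that $\mathbf{x}'=\mathbf{u}\,ab\,\mathbf{w}\,de\,\mathbf{v}$, $\mathbf{u}ab\in D^*(\mathbf{r}ab)$, $ab\mathbf{w}de\in D^*(ab\mathbf{t}de)$, and $de\mathbf{v}\in D^*(de\mathbf{s})$.
   Context: $\Sigma_q=\{0,1,\dots,q-1\}$ with $q\ge 3$; $\Sigma_q^*$ is the set of all finite strings over $\Sigma_q$ (including the empty string). A tandem duplication of length $k$ transforms a string $\mathbf{u}\mathbf{v}\mathbf{w}$ with $|\mathbf{v}|=k$ into $\mathbf{u}\mathbf{v}\mathbf{v}\mathbf{w}$; a $\le 3$-TD is a tandem duplication of length $1$, $2$ or $3$. $D^*(\mathbf{x})$ denotes the set of strings obtainable from $\mathbf{x}$ by finitely many (possibly zero) $\le3$-TDs. *)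

(* Strings over Sigma_q are sequences of 'I_q. *)
From mathcomp Require Import all_boot.
Set Implicit Arguments. Unset Strict Implicit. Unset Printing Implicit Defensive.

Inductive td3_step (T : Type) : seq T -> seq T -> Prop :=
| TD3 (u v w : seq T) : 1 <= size v <= 3 -> td3_step (u ++ v ++ w) (u ++ v ++ v ++ w).

Inductive Dstar (T : Type) (x : seq T) : seq T -> Prop :=
| Dstar_refl : Dstar x x
| Dstar_step (y z : seq T) : Dstar x y -> td3_step y z -> Dstar x z.

From mathcomp Require Import all_boot.
From mathcomp Require Import zify.

(* Cover  x = r ab t de s  by three overlapping windows
   r ab | ab t de | de s, consecutive windows sharing one anchor of length 2.
   A factor of length at most 3 cannot reach from before an anchor to after
   it (that needs length 4), nor lie strictly inside it (that needs length 0),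
   so every <=3-TD applied to  U ab W de V  duplicates a factor lying in one
   window and keeping that window's anchors in place.  Such a step is a
   <=3-TD of that window alone, and the result again has the shape
   U' ab W' de V'.  Hence the three window derivations can be maintained
   along any derivation x ->* x'. *)

Section Splitting.

Context {T : Type}.

Lemma cat_split {A B C D : seq T} :
  A ++ B = C ++ D -> size A <= size C ->
  exists X, C = A ++ X /\ B = X ++ D.
Proof.
move=> E hs; exists (drop (size A) C).
have hA : A = take (size A) C.
  by move: (congr1 (take (size A)) E); rewrite take_size_cat // takel_cat.
split; first by rewrite {1}hA cat_take_drop.
move: (congr1 (drop (size A)) E); rewrite drop_size_cat // => ->.
rewrite -{1}(cat_take_drop (size A) C) -catA drop_size_cat //.
by rewrite size_take_min; apply/minn_idPl.
Qed.

Lemma factor_in_window {P m Z L C R : seq T} :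
  P ++ m ++ Z = L ++ C ++ R -> size L <= size P ->
  size P + size m <= size L + size C ->
  exists P1 Z1, [/\ P = L ++ P1, Z = Z1 ++ R & C = P1 ++ m ++ Z1].
Proof.
move=> E hL hR.
have [P1 [hP hCR]] := cat_split (esym E) hL.
have E1 : (P1 ++ m) ++ Z = C ++ R by rewrite -catA -hCR.
have hsz : size (P1 ++ m) <= size C.
  by move: hR; rewrite hP !size_cat; lia.
have [Z1 [hC hZ]] := cat_split E1 hsz.
by exists P1, Z1; rewrite hC -catA.
Qed.

(* Duplicating a factor m of S1 ++ C0 ++ S2 that ends no earlier than S1
   and starts no later than S2 keeps S1 as prefix and S2 as suffix: writing
   P ++ m = S1 ++ X and S1 ++ C0 = P ++ Y, the result is S1 ++ (X ++ Y) ++ S2. *)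
Lemma dup_keeps_ends {S1 C0 S2 P m Z : seq T} :
  P ++ m ++ Z = S1 ++ C0 ++ S2 ->
  size S1 <= size P + size m -> size P <= size S1 + size C0 ->
  exists C0', P ++ m ++ m ++ Z = S1 ++ C0' ++ S2.
Proof.
move=> E h1 h2.
have E1 : (P ++ m) ++ Z = S1 ++ C0 ++ S2 by rewrite -catA.
have h1' : size S1 <= size (P ++ m) by rewrite size_cat.
have [X [hX _]] := cat_split (esym E1) h1'.
have E2 : P ++ m ++ Z = (S1 ++ C0) ++ S2 by rewrite -catA.
have h2' : size P <= size (S1 ++ C0) by rewrite size_cat.
have [Y [_ hmZ]] := cat_split E2 h2'.
by exists (X ++ Y); rewrite hmZ catA hX -!catA.
Qed.

Lemma td3_step_window {L S1 C0 S2 R P m Z : seq T} :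
  P ++ m ++ Z = L ++ (S1 ++ C0 ++ S2) ++ R ->
  1 <= size m <= 3 ->
  size L <= size P <= size L + size S1 + size C0 ->
  size L + size S1 <= size P + size m <= size L + size S1 + size C0 + size S2 ->
  exists C0', P ++ m ++ m ++ Z = L ++ (S1 ++ C0' ++ S2) ++ R
              /\ td3_step (S1 ++ C0 ++ S2) (S1 ++ C0' ++ S2).
Proof.
move=> E hm /andP [hL hP] /andP [hS1 hend].
have hC : size P + size m <= size L + size (S1 ++ C0 ++ S2).
  by rewrite !size_cat !addnA.
have [P1 [Z1 [hP1 hZ1 hC1]]] := factor_in_window E hL hC.
subst P Z; rewrite size_cat in hP hS1.
have [C0' hC'] : exists C0', P1 ++ m ++ m ++ Z1 = S1 ++ C0' ++ S2.
  by apply: dup_keeps_ends (esym hC1) _ _; lia.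
exists C0'; rewrite -hC' hC1; split; first by rewrite -!catA.
exact: TD3.
Qed.

End Splitting.

(* Position bookkeeping for U ++ A ++ W ++ B ++ V with size A = size B = 2
   (u = size U, w = size W): a factor occupying [i, i + k) with
   1 <= k <= 3 lies in U ++ A and starts in U, or lies in A ++ W ++ B,
   ending after A and starting before B, or lies in B ++ V and ends after B;
   crossing a whole anchor would need k >= 4. *)
Lemma factor_window_cover (u w i k : nat) : 1 <= k <= 3 ->
  [\/ i <= u /\ i + k <= u + 2,
      [/\ u <= i <= u + 2 + w & u + 2 <= i + k <= u + 2 + w + 2]
    | u + 2 + w <= i /\ u + 2 + w + 2 <= i + k].
Proof.
move=> hk.
have [pre|npre] := boolP ((i <= u) && (i + k <= u + 2)).
  by constructor 1; apply/andP.
have [suf|nsuf] := boolP ((u + 2 + w <= i) && (u + 2 + w + 2 <= i + k)).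
  by constructor 3; apply/andP.
by constructor 2; split; lia.
Qed.

Section ThreeWindows.

Context {T : Type} (A B : seq T).
Hypotheses (hA : size A = 2) (hB : size B = 2).

Definition anchored_split (U0 W0 V0 y : seq T) : Prop :=
  exists U W V, [/\ y = U ++ A ++ W ++ B ++ V,
                    Dstar (U0 ++ A) (U ++ A),
                    Dstar (A ++ W0 ++ B) (A ++ W ++ B)
                  & Dstar (B ++ V0) (B ++ V)].

(* The decomposition survives one <=3-TD: the duplicated factor lies in one
   of the three windows, keeping its anchors, so the step is a step of that
   window. *)
Lemma anchored_split_step (U0 W0 V0 y z : seq T) :
  anchored_split U0 W0 V0 y -> td3_step y z -> anchored_split U0 W0 V0 z.
Proof.
move=> [U [W [V [Hy DU DW DV]]]] Hstep; case: Hstep Hy => P m Z hm Hy.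
have hsz := congr1 size Hy; rewrite !size_cat hA hB in hsz.
case: (@factor_window_cover (size U) (size W) (size P) (size m) hm).
- (* prefix window U ++ A, with empty left context and left anchor *)
  move=> [hP hPm].
  have E : P ++ m ++ Z = [::] ++ ([::] ++ U ++ A) ++ (W ++ B ++ V).
    by rewrite Hy /= -catA.
  have [U' [Ez HU]] := td3_step_window E hm
    ltac:(simpl; lia) ltac:(rewrite /= hA; lia).
  exists U', W, V; split => //; last exact: Dstar_step DU HU.
  by rewrite Ez /= -catA.
-
  move=> [hP hPm].
  have E : P ++ m ++ Z = U ++ (A ++ W ++ B) ++ V by rewrite Hy -!catA.
  have [W' [Ez HW]] := td3_step_window E hm
    ltac:(rewrite hA; lia) ltac:(rewrite hA hB; lia).
  exists U, W', V; split => //; last exact: Dstar_step DW HW.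
  by rewrite Ez -!catA.
- (* suffix window B ++ V, with empty right anchor and right context *)
  move=> [hP hPm].
  have E : P ++ m ++ Z = (U ++ A ++ W) ++ (B ++ V ++ [::]) ++ [::].
    by rewrite !cats0 Hy -!catA.
  have [V' [Ez HV]] := td3_step_window E hm
    ltac:(rewrite !size_cat hA hB; lia) ltac:(rewrite !size_cat hA hB; lia).
  rewrite !cats0 in Ez HV.
  exists U, W, V'; split => //; last exact: Dstar_step DV HV.
  by rewrite Ez -!catA.
Qed.

Lemma anchored_split_Dstar (U0 W0 V0 y : seq T) :
  Dstar (U0 ++ A ++ W0 ++ B ++ V0) y -> anchored_split U0 W0 V0 y.
Proof.
elim=> [|y' z _ IH Hstep]; last exact: anchored_split_step IH Hstep.
by exists U0, W0, V0; split => //; apply: Dstar_refl.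
Qed.

End ThreeWindows.

Theorem lemma2 (q : nat) (hq : 3 <= q) (x x' r t s : seq 'I_q) (a b d e : 'I_q) :
  5 <= size x ->
  Dstar x x' ->
  x = r ++ [:: a; b] ++ t ++ [:: d; e] ++ s ->
  t <> [::] ->
  exists u w v : seq 'I_q,
    [/\ x' = u ++ [:: a; b] ++ w ++ [:: d; e] ++ v,
        Dstar (r ++ [:: a; b]) (u ++ [:: a; b]),
        Dstar ([:: a; b] ++ t ++ [:: d; e]) ([:: a; b] ++ w ++ [:: d; e])
      & Dstar ([:: d; e] ++ s) ([:: d; e] ++ v)].
Proof.
move=> _ Hx' Hx _; subst x.
exact: (anchored_split_Dstar [:: a; b] [:: d; e] erefl erefl).
Qed.
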